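(* For every integer $k\ge 8$, the Hasse diagram (directed graph of the cover relation) of $TW_k$ has clique-width at least $\lceil k/13\rceil$.
   Context: For an integer $k\ge3$, $TW_k$ (''trunk with woodpeckers'') is the order on the elements $t_0,\dots,t_{k-1}$ together with one element $w_{a,b}$ for each pair of integers $0\le a$, $b\le k-1$ with $b\ge a+2$, whose order relation is: $t_j<t_l$ iff $j<l$; $t_j<w_{a,b}$ iff $j\le a$; $w_{a,b}<t_j$ iff $j\ge b$; $w_{a,b}<w_{c,d}$ iff $b\le c$; all other pairs are incomparable. It has $\frac{k^2-k}{2}+1$ elements; its covering pairs are $t_j\lessdot t_{j+1}$, $t_a\lessdot w_{a,b}$ and $w_{a,b}\lessdot t_b$. ($x$ is covered by $y$ if $x<y$ and no $z$ satisfies $x<z<y$.) Clique-width is the standard notion (minimum number of labels in a clique-width expression). *)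

From mathcomp Require Import all_boot.
Set Implicit Arguments. Unset Strict Implicit. Unset Printing Implicit Defensive.

(* Labels are natural numbers; an expression "uses at most n labels"   *)
(* when every label occurring in it is < n.                            *)
Inductive cwexp (V : Type) :=
  | CWVert of V & nat
  | CWUnion of cwexp V & cwexp V
  | CWArc of nat & nat & cwexp V
  | CWRelab of nat & nat & cwexp V.

Section CW.
Variable V : eqType.

Fixpoint cw_verts (e : cwexp V) : seq V :=
  match e with
  | CWVert v _ => [:: v]
  | CWUnion e1 e2 => cw_verts e1 ++ cw_verts e2
  | CWArc _ _ e1 => cw_verts e1
  | CWRelab _ _ e1 => cw_verts e1
  end.

Fixpoint cw_lab (e : cwexp V) (v : V) : nat :=
  match e with
  | CWVert _ i => i
  | CWUnion e1 e2 => if v \in cw_verts e1 then cw_lab e1 v else cw_lab e2 v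
  | CWArc _ _ e1 => cw_lab e1 v
  | CWRelab i j e1 => if cw_lab e1 v == i then j else cw_lab e1 v
  end.

Fixpoint cw_arc (e : cwexp V) (u v : V) : bool :=
  match e with
  | CWVert _ _ => false
  | CWUnion e1 e2 => cw_arc e1 u v || cw_arc e2 u v
  | CWArc i j e1 =>
      cw_arc e1 u v ||
      [&& u \in cw_verts e1, v \in cw_verts e1, cw_lab e1 u == i & cw_lab e1 v == j]
  | CWRelab _ _ e1 => cw_arc e1 u v
  end.

Fixpoint cw_wf (e : cwexp V) : bool :=
  match e with
  | CWVert _ _ => true
  | CWUnion e1 e2 => [&& cw_wf e1, cw_wf e2 & uniq (cw_verts e1 ++ cw_verts e2)]
  | CWArc i j e1 => (i != j) && cw_wf e1
  | CWRelab _ _ e1 => cw_wf e1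
  end.

Fixpoint cw_labels_lt (n : nat) (e : cwexp V) : bool :=
  match e with
  | CWVert _ i => i < n
  | CWUnion e1 e2 => cw_labels_lt n e1 && cw_labels_lt n e2
  | CWArc i j e1 => [&& i < n, j < n & cw_labels_lt n e1]
  | CWRelab i j e1 => [&& i < n, j < n & cw_labels_lt n e1]
  end.
End CW.

Definition cw_at_most (T : finType) (E : rel T) (n : nat) : Prop :=
  exists e : cwexp T,
    [/\ cw_wf e, cw_labels_lt n e,
        (forall v : T, v \in cw_verts e) &
        (forall u v : T, cw_arc e u v = E u v)].

(* The order TW_k (trunk with woodpeckers).                             *)
(* inl j      stands for t_j        (0 <= j <= k-1)                      *)
(* inr (a,b)  stands for w_{a,b}    (0 <= a, b <= k-1, b >= a+2)         *)
Definition tw_valid (k : nat) (x : 'I_k + ('I_k * 'I_k)) : bool :=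
  match x with
  | inl _ => true
  | inr (a, b) => a.+2 <= b
  end.

Definition tw_elt (k : nat) := {x : 'I_k + ('I_k * 'I_k) | tw_valid x}.

Definition tw_lt_raw (k : nat) (x y : 'I_k + ('I_k * 'I_k)) : bool :=
  match x, y with
  | inl j, inl l => j < l
  | inl j, inr (a, _) => j <= a
  | inr (_, b), inl j => b <= j
  | inr (_, b), inr (c, _) => b <= c
  end.

Definition tw_lt (k : nat) (x y : tw_elt k) : bool := tw_lt_raw (val x) (val y).

Definition tw_cover (k : nat) (x y : tw_elt k) : bool :=
  tw_lt x y && [forall z : tw_elt k, ~~ (tw_lt x z && tw_lt z y)].

From mathcomp Require Import all_boot zify.
Set Implicit Arguments. Unset Strict Implicit. Unset Printing Implicit Defensive.

(* Take a subexpression f of the clique-width expression containing between 3N and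
   6N - 2 trunk vertices, N = ceil(k/13); then at least N trunk vertices lie outside f.
   Vertices with the same label in f have the same neighbours outside f.  Choose trunk
   indices a_i inside f and b_i outside f, no a_i consecutive to any b_j: the woodpecker
   w_{a_i,b_i} is adjacent exactly to t_{a_i} and t_{b_i}, so whichever side of f it lies
   on yields an edge across f, and these N edges form an induced matching.  Their N
   endpoints inside f therefore carry pairwise distinct labels. *)

Section CliqueWidth.
Variable V : eqType.
Implicit Types (e f : cwexp V) (u v w : V).

Fixpoint cw_subexp f e : Prop :=
  f = e \/ match e with
  | CWVert _ _ => False
  | CWUnion e1 e2 => cw_subexp f e1 \/ cw_subexp f e2
  | CWArc _ _ e1 | CWRelab _ _ e1 => cw_subexp f e1
  end.

Definition cw_adj e u v := cw_arc e u v || cw_arc e v u.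

Lemma cw_subexp_verts f e : cw_subexp f e -> {subset cw_verts f <= cw_verts e}.
Proof.
elim: e => [x i|e1 IH1 e2 IH2|i j e1 IH|i j e1 IH] /= [-> //|] //.
- by case=> [/IH1|/IH2] sub u /sub; rewrite mem_cat => ->; rewrite ?orbT.
Qed.

Lemma cw_arc_verts e u v : cw_arc e u v -> (u \in cw_verts e) && (v \in cw_verts e).
Proof.
elim: e => [x i|e1 IH1 e2 IH2|i j e1 IH|i j e1 IH] //=.
- by rewrite !mem_cat; case/orP => [/IH1|/IH2] /andP[-> ->]; rewrite ?orbT.
- by case/orP => [/IH //|/and4P[-> -> _ _]].
Qed.

Lemma cw_adj_notin e u v : v \notin cw_verts e -> cw_adj e u v = false.
Proof.
by move=> /negbTE hv; apply/norP; split; apply/negP => /cw_arc_verts;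
  rewrite hv ?andbF.
Qed.

Lemma cw_labels_lt_subexp n f e :
  cw_subexp f e -> cw_labels_lt n e -> cw_labels_lt n f.
Proof.
elim: e => [x i|e1 IH1 e2 IH2|i j e1 IH|i j e1 IH] /= [-> //|] //.
- by case=> hs /andP[h1 h2]; [exact: IH1 hs h1|exact: IH2 hs h2].
- by move=> hs /and3P[_ _ h]; exact: IH hs h.
- by move=> hs /and3P[_ _ h]; exact: IH hs h.
Qed.

Lemma cw_lab_lt n e v : cw_labels_lt n e -> v \in cw_verts e -> cw_lab e v < n.
Proof.
elim: e => [x i|e1 IH1 e2 IH2|i j e1 IH|i j e1 IH] //=.
- move=> /andP[h1 h2]; rewrite mem_cat; case: ifP => [hv _|hv /= hv2].
  + exact: IH1.
  + exact: IH2.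
- by move=> /and3P[_ _ h] /(IH h).
- by move=> /and3P[_ hj h] /(IH h); case: ifP.
Qed.

Lemma cat_uniq_notinl (s1 s2 : seq V) v : uniq (s1 ++ s2) -> v \in s2 -> v \notin s1.
Proof. by rewrite cat_uniq => /and3P[_ /hasPn h _] /h. Qed.

Lemma cat_uniq_notinr (s1 s2 : seq V) v : uniq (s1 ++ s2) -> v \in s1 -> v \notin s2.
Proof. by rewrite uniq_catC; apply: cat_uniq_notinl. Qed.

Lemma cw_lab_subexp_eq f e u v : cw_subexp f e -> cw_wf e ->
  u \in cw_verts f -> v \in cw_verts f -> cw_lab f u = cw_lab f v ->
  cw_lab e u = cw_lab e v.
Proof.
move=> + + hu hv huv.
elim: e => [x i|e1 IH1 e2 IH2|i j e1 IH|i j e1 IH] [<-|] //=.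
- case=> hs /and3P[w1 w2 dis].
  + by rewrite !(cw_subexp_verts hs) // IH1.
  have [hu2 hv2] := (cw_subexp_verts hs hu, cw_subexp_verts hs hv).
  by rewrite !ifN ?(cat_uniq_notinl dis) ?IH2.
- by move=> hs /andP[_ /(IH hs)].
- by move=> hs /(IH hs) ->.
Qed.

Lemma cw_adjC e u v : cw_adj e u v = cw_adj e v u.
Proof. exact: orbC. Qed.

Lemma cw_adj_subexp_eq f e u v w : cw_subexp f e -> cw_wf e ->
  u \in cw_verts f -> v \in cw_verts f -> cw_lab f u = cw_lab f v ->
  w \notin cw_verts f -> cw_adj e u w = cw_adj e v w.
Proof.
move=> + + hu hv huv hw.
elim: e => [x i|e1 IH1 e2 IH2|i j e1 IH|i j e1 IH] [<-|] //=;
  try by rewrite !cw_adj_notin.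
- have adjU x : cw_adj (CWUnion e1 e2) x w = cw_adj e1 x w || cw_adj e2 x w.
    exact: orbACA.
  case=> hs /and3P[w1 w2 dis]; rewrite !adjU.
    have out2 x : x \in cw_verts f -> cw_adj e2 x w = false.
      move/(cw_subexp_verts hs)/(cat_uniq_notinr dis) => ?.
      by rewrite cw_adjC cw_adj_notin.
    by rewrite IH1 // !out2.
  have out1 x : x \in cw_verts f -> cw_adj e1 x w = false.
    move/(cw_subexp_verts hs)/(cat_uniq_notinl dis) => ?.
    by rewrite cw_adjC cw_adj_notin.
  by rewrite IH2 // !out1.
- move=> hs /andP[_ wf1].
  have adjA x : cw_adj (CWArc i j e1) x w = cw_adj e1 x w ||
      [&& x \in cw_verts e1, w \in cw_verts e1, cw_lab e1 x == i & cw_lab e1 w == j]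
      || [&& w \in cw_verts e1, x \in cw_verts e1, cw_lab e1 w == i & cw_lab e1 x == j].
    by rewrite /cw_adj /= -!orbA; congr orb; rewrite orbCA.
  by rewrite !adjA IH // (cw_subexp_verts hs hu) (cw_subexp_verts hs hv)
    (cw_lab_subexp_eq hs wf1 hu hv huv).
Qed.

Lemma cw_labels_ge_matching n N f e (x d : nat -> V) :
  cw_subexp f e -> cw_wf e -> cw_labels_lt n e ->
  (forall i, i < N -> x i \in cw_verts f /\ d i \notin cw_verts f) ->
  (forall i j, i < N -> j < N -> cw_adj e (x j) (d i) = (i == j)) ->
  N <= n.
Proof.
move=> hs wf hlt hxd hadj.
have lab_inj : {in iota 0 N &, injective (fun i => cw_lab f (x i))}.
  move=> i j; rewrite !mem_iota /= => hi hj hl; apply/eqP.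
  have [[xi di] [xj _]] := (hxd i hi, hxd j hj).
  by rewrite -hadj // -(cw_adj_subexp_eq hs wf xi xj hl di) hadj.
have labs_lt : {subset [seq cw_lab f (x i) | i <- iota 0 N] <= iota 0 n}.
  move=> l /mapP[i]; rewrite !mem_iota /= => hi ->.
  exact: cw_lab_lt (cw_labels_lt_subexp hs hlt) (hxd i hi).1.
have labs_uniq : uniq [seq cw_lab f (x i) | i <- iota 0 N].
  by rewrite map_inj_in_uniq ?iota_uniq.
by have := uniq_leq_size labs_uniq labs_lt; rewrite size_map !size_iota.
Qed.

Lemma cw_balanced_subexp (I : finType) (g : I -> V) m e : injective g -> 1 < m ->
  m <= #|[set i | g i \in cw_verts e]| ->
  exists2 f, cw_subexp f e & m <= #|[set i | g i \in cw_verts f]| <= 2 * m.-1.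
Proof.
move=> g_inj m_gt1; elim: e => [v l|e1 IH1 e2 IH2|i j e1 IH|i j e1 IH] he.
- have /card_gt1P[i [j [+ + /eqP[]]]] : 1 < #|[set i | g i \in cw_verts (CWVert v l)]|.
    exact: leq_trans he.
  by rewrite !inE => /eqP gi /eqP gj; apply: g_inj; rewrite gi gj.
- have setU : [set i | g i \in cw_verts (CWUnion e1 e2)] =
      [set i | g i \in cw_verts e1] :|: [set i | g i \in cw_verts e2].
    by apply/setP => i; rewrite !inE mem_cat.
  have [h1|h1] := leqP m #|[set i | g i \in cw_verts e1]|.
    by have [f hs hf] := IH1 h1; exists f => //; right; left.
  have [h2|h2] := leqP m #|[set i | g i \in cw_verts e2]|.
    by have [f hs hf] := IH2 h2; exists f => //; right; right.
  exists (CWUnion e1 e2); first by left.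
  have := leq_card_setU [set i | g i \in cw_verts e1] [set i | g i \in cw_verts e2].
  by rewrite setU in he *; case=> hU _; apply/andP; split=> //; lia.
- by have [f hs hf] := IH he; exists f => //; right.
- by have [f hs hf] := IH he; exists f => //; right.
Qed.
End CliqueWidth.

Section TrunkWithWoodpeckers.
Variable k : nat.
Implicit Types (a b c : 'I_k) (x y : tw_elt k).

Definition tw_trunk a : tw_elt k := exist _ (inl a) isT.

Lemma tw_trunk_inj : injective tw_trunk.
Proof. by move=> a b [->]. Qed.

(* For [a] and [b] at distance less than 2 there is no woodpecker: the junk value is [t_a]. *)
Definition tw_woodpecker a b : tw_elt k :=
  insubd (tw_trunk a) (inr (if a < b then (a, b) else (b, a))).

Definition consecutive (i j : nat) := (i.+1 == j) || (j.+1 == i).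

Definition tw_adj x y := tw_cover x y || tw_cover y x.

Definition tw_cover_raw (x y : 'I_k + ('I_k * 'I_k)) : bool :=
  match x, y with
  | inl j, inl l => l == j.+1 :> nat
  | inl j, inr (a, _) => j == a :> nat
  | inr (_, b), inl j => j == b :> nat
  | inr _, inr _ => false
  end.

Lemma tw_coverE x y : tw_cover x y = tw_cover_raw (val x) (val y).
Proof.
apply/idP/idP.
- case: x => [[j|[a b]] hx]; case: y => [[l|[c d]] hy];
    rewrite /tw_cover /tw_lt /= => /andP[hlt /forallP no_between].
  + have [lt_jl|] := ltnP j.+1 l; last by lia.
    by move: (no_between (tw_trunk (Ordinal (ltn_trans lt_jl (ltn_ord l)))));
      rewrite /= ltnSn lt_jl.
  + have [lt_jc|] := ltnP j c; last by lia.
    by move: (no_between (tw_trunk c)); rewrite /= lt_jc leqnn.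
  + have [lt_bl|] := ltnP b l; last by lia.
    by move: (no_between (tw_trunk b)); rewrite /= leqnn lt_bl.
  + by move: (no_between (tw_trunk b)); rewrite /= leqnn hlt.
- case: x => [[j|[a b]] hx]; case: y => [[l|[c d]] hy];
  rewrite /tw_cover => h; apply/andP; (split; [rewrite /tw_lt /= in hx hy h |- *; lia|
    apply/forallP => -[[m|[p q]] hz]; rewrite /tw_lt /= in hx hy hz h |- *; lia]).
Qed.

Lemma tw_adjC x y : tw_adj x y = tw_adj y x.
Proof. exact: orbC. Qed.

Lemma val_tw_woodpecker a b : a != b -> ~~ consecutive a b ->
  val (tw_woodpecker a b) = inr (if a < b then (a, b) else (b, a)).
Proof.
move=> neq_ab; rewrite /consecutive /tw_woodpecker val_insubd => not_consec.
have {}neq_ab : nat_of_ord a != b by [].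
by case: ifP => // /negP[]; case: ifP => /= ?; lia.
Qed.

Lemma tw_adj_trunk a b : tw_adj (tw_trunk a) (tw_trunk b) = consecutive a b.
Proof. by rewrite /tw_adj !tw_coverE /consecutive /= !(eq_sym _.+1). Qed.

Lemma tw_adj_trunk_woodpecker c a b : a != b -> ~~ consecutive a b ->
  tw_adj (tw_trunk c) (tw_woodpecker a b) = (c == a) || (c == b).
Proof.
move=> neq_ab not_consec; rewrite /tw_adj !tw_coverE val_tw_woodpecker //=.
by case: ifP => _; rewrite // orbC.
Qed.

Lemma tw_adj_woodpeckers a b a' b' : a != b -> ~~ consecutive a b ->
  a' != b' -> ~~ consecutive a' b' ->
  tw_adj (tw_woodpecker a b) (tw_woodpecker a' b') = false.
Proof.
by move=> *; rewrite /tw_adj !tw_coverE !val_tw_woodpecker //; case: ifP; case: ifP.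
Qed.

Lemma card_consecutive b : #|[set a : 'I_k | consecutive a b]| <= 2.
Proof.
rewrite cardE -(size_map (@nat_of_ord k)).
apply: (@uniq_leq_size _ _ [:: b.-1; b.+1]).
  by rewrite (map_inj_uniq (@ord_inj k)) enum_uniq.
move=> y /mapP[a]; rewrite mem_enum inE /consecutive => + ->.
by case/orP => /eqP ha; rewrite !inE -ha ?eqxx ?orbT.
Qed.

Lemma card_nonconsecutive (S : {set 'I_k}) (bs : seq 'I_k) :
  #|S| - 2 * size bs <= #|[set a in S | all (fun b => ~~ consecutive a b) bs]|.
Proof.
elim: bs => [|b bs].
  by rewrite subn0; apply: subset_leq_card; apply/subsetP => a; rewrite !inE andbT.
have -> : [set a in S | all (fun b => ~~ consecutive a b) (b :: bs)] =
    [set a in S | all (fun b => ~~ consecutive a b) bs] :\: [set a : 'I_k | consecutive a b].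
  by apply/setP => a; rewrite !inE /= andbCA andbA andbC.
set F := [set a in S | _]; set C := [set a : 'I_k | _] => IH.
have C_le2 : #|C| <= 2 := card_consecutive b.
have FC_le : #|F :&: C| <= #|C| := subset_leq_card (subsetIr F C).
rewrite cardsD /= mulnS addnC subnDA.
exact: leq_trans (leq_sub2r 2 IH) (leq_sub2l _ (leq_trans FC_le C_le2)).
Qed.

Lemma exists_nonconsecutive_indices N (S : {set 'I_k}) :
  0 < N -> 3 * N <= #|S| -> N <= #|~: S| ->
  exists a b : nat -> 'I_k, [/\ forall i, i < N -> a i \in S /\ b i \notin S,
    forall i j, i < N -> j < N -> ~~ consecutive (a i) (b j),
    {in gtn N &, injective a} & {in gtn N &, injective b}].
Proof.
move=> N_gt0 le_3N_S le_N_notS.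
have [a0 _] : exists a0, a0 \in S by apply/card_gt0P/(leq_trans _ le_3N_S); lia.
have pick_uniq (A : {set 'I_k}) : N <= #|A| ->
    [/\ forall i, i < N -> nth a0 (take N (enum A)) i \in A
      & {in gtn N &, injective (nth a0 (take N (enum A)))}].
  move=> le_N_A; have size_take_enum : size (take N (enum A)) = N.
    by rewrite size_takel // -cardE.
  split=> [i lt_iN|i j lt_iN lt_jN /eqP].
    by rewrite -mem_enum; apply: mem_take (mem_nth _ _); rewrite size_take_enum.
  by rewrite nth_uniq ?size_take_enum ?take_uniq ?enum_uniq // => /eqP.
set bs := take N (enum (~: S)).
set F := [set a in S | all (fun b => ~~ consecutive a b) bs].
have le_N_F : N <= #|F|.
  apply: leq_trans (card_nonconsecutive S bs).
  rewrite size_takel -?cardE // leq_subRL; lia.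
have [bs_notS bs_inj] := pick_uniq _ le_N_notS.
have [as_F as_inj] := pick_uniq _ le_N_F.
exists (nth a0 (take N (enum F))), (nth a0 bs); split=> // [i lt_iN|i j lt_iN lt_jN].
  by have := as_F i lt_iN; rewrite !inE => /andP[-> _]; have := bs_notS i lt_iN; rewrite inE.
have := as_F i lt_iN; rewrite inE => /andP[_ /allP]; apply.
by rewrite mem_nth // size_takel // -cardE.
Qed.

Lemma tw_cut_matching N (X : seq (tw_elt k)) : 0 < N ->
  3 * N <= #|[set a | tw_trunk a \in X]| -> N <= #|~: [set a | tw_trunk a \in X]| ->
  exists x d : nat -> tw_elt k, (forall i, i < N -> x i \in X /\ d i \notin X) /\
    (forall i j, i < N -> j < N -> tw_adj (x j) (d i) = (i == j)).
Proof.
move=> N_gt0 le_3N_S le_N_notS.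
have [a [b [ab_sep not_consec a_inj b_inj]]] :=
  exists_nonconsecutive_indices N_gt0 le_3N_S le_N_notS.
have a_X i : i < N -> tw_trunk (a i) \in X by move/ab_sep => [+ _]; rewrite inE.
have b_notX i : i < N -> tw_trunk (b i) \notin X by move/ab_sep => [_]; rewrite inE.
have neq_ab i j : i < N -> j < N -> (a i == b j) = false.
  move=> lt_iN lt_jN; apply/negbTE/eqP => eq_ab.
  by have := b_notX j lt_jN; rewrite -eq_ab a_X.
have eq_a i j : i < N -> j < N -> (a i == a j) = (i == j).
  by move=> lt_iN lt_jN; rewrite (inj_in_eq a_inj).
have eq_b i j : i < N -> j < N -> (b i == b j) = (i == j).
  by move=> lt_iN lt_jN; rewrite (inj_in_eq b_inj).
pose w i := tw_woodpecker (a i) (b i).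
exists (fun i => if w i \in X then w i else tw_trunk (a i)),
       (fun i => if w i \in X then tw_trunk (b i) else w i).
split=> [i lt_iN|i j lt_iN lt_jN]; first by case: ifP => [|/negbT]; split; auto.
have wp_ok l : l < N -> a l != b l /\ ~~ consecutive (a l) (b l).
  by move=> lt_lN; rewrite neq_ab ?not_consec.
have [[ab_i nc_i] [ab_j nc_j]] := (wp_ok i lt_iN, wp_ok j lt_jN).
case: ifP => wj; case: ifP => wi.
- by rewrite tw_adjC tw_adj_trunk_woodpecker // eq_sym neq_ab // eq_b.
- have -> : (i == j) = false by apply/negbTE/eqP => eq_ij; rewrite eq_ij wj in wi.
  exact: tw_adj_woodpeckers.
- have -> : (i == j) = false by apply/negbTE/eqP => eq_ij; rewrite eq_ij wj in wi.
  by rewrite tw_adj_trunk (negbTE (not_consec j i lt_jN lt_iN)).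
- by rewrite tw_adj_trunk_woodpecker // eq_a // neq_ab // orbF eq_sym.
Qed.

End TrunkWithWoodpeckers.

Theorem lemma7p2 (k : nat) (hk : 8 <= k) (n : nat) :
  cw_at_most (@tw_cover k) n -> (k + 12) %/ 13 <= n.
Proof.
case=> e [wf labs_lt all_verts arcs].
set N := (k + 12) %/ 13.
have [N_gt0 le_7N] : 0 < N /\ 7 * N <= k + 2 by rewrite /N; lia.
have le_3N_e : 3 * N <= #|[set a | tw_trunk a \in cw_verts e]|.
  have -> : [set a | tw_trunk a \in cw_verts e] = setT.
    by apply/setP => a; rewrite !inE all_verts.
  by rewrite cardsT card_ord; lia.
have [f sub_fe] := cw_balanced_subexp (@tw_trunk_inj k) (ltac:(lia) : 1 < 3 * N) le_3N_e.
set S := [set a | tw_trunk a \in cw_verts f] => /andP[le_3N_S le_S_6N].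
have le_N_notS : N <= #|~: S|.
  have := cardsC S; rewrite card_ord; lia.
have [x [d [xd adj]]] := tw_cut_matching N_gt0 le_3N_S le_N_notS.
apply: (cw_labels_ge_matching sub_fe wf labs_lt xd) => i j lt_iN lt_jN.
by rewrite /cw_adj !arcs -adj.
Qed.
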